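(* Let $n \ge 1$ and let $a_1,\dots,a_n > 0$. Let $\Lambda_o \subset \mathbb{R}^n$ be the orthogonal lattice generated by $a_1\mathbf{e}_1,\dots,a_n\mathbf{e}_n$ (where $\mathbf{e}_i$ are the standard basis vectors). Let $\Lambda_s \neq \Lambda_o$ be a lattice in $\mathbb{R}^n$ having a generator matrix that is an upper triangular $n\times n$ real matrix with diagonal entries $a_1,\dots,a_n$ (a ''skewing'' of $\Lambda_o$). Then for all $x>0$, $$\sum_{\mathbf{t}\in\Lambda_s} e^{-x\|\mathbf{t}\|^2} < \sum_{\mathbf{t}\in\Lambda_o} e^{-x\|\mathbf{t}\|^2}.$$
   Context: A lattice $\Lambda\subset\mathbb{R}^n$ generated by a matrix $M\in\mathbb{R}^{n\times n}$ with linearly independent columns is $\{M\omega : \omega\in\mathbb{Z}^n\}$. $\|\cdot\|$ is the Euclidean norm. *)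

From HB Require Import structures.
From mathcomp Require Import all_boot all_order all_algebra.
From mathcomp Require Import all_classical all_reals all_analysis.
Set Implicit Arguments. Unset Strict Implicit. Unset Printing Implicit Defensive.
Import Order.TTheory GRing.Theory Num.Theory.
Local Open Scope classical_set_scope.
Local Open Scope ring_scope.

Definition lattice (R : realType) (n : nat) (M : 'M[R]_n) : set 'cV[R]_n :=
  [set M *m map_mx (fun z : int => z%:~R) w | w in [set: 'cV[int]_n]].

Definition sqnorm (R : realType) (n : nat) (t : 'cV[R]_n) : R :=
  \sum_(i < n) t i 0 ^+ 2.

Definition theta_sum (R : realType) (n : nat) (L : set 'cV[R]_n) (x : R) : \bar R :=
  \esum_(t in L) (expR (- x * sqnorm t))%:E.

(* A lattice sum is a sum over integer vectors w of exp(-x ||M w||^2). When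
   the i-th column of M is a_i e_i, summing along the lines parallel to e_i
   expresses it through one-dimensional theta functions
   theta_s(c) = sum_k exp(-s (k + c)^2), evaluated at c = (M w)_i / a_i.
   The duplication formula for theta_s shows theta_s(c) <= theta_s(0), with
   equality only for integral c.  Hence replacing the i-th row of M by a_i e_i
   does not decrease the sum.  Doing so for the rows of the upper triangular M
   in increasing order turns M into diag(a); the step at a row with a
   non-integral ratio M_ij / a_i is strict, and such a row exists because
   otherwise M = diag(a) U with U unipotent integral, so both matrices
   generate the same lattice. *)

From HB Require Import structures.
From mathcomp Require Import all_boot all_order all_algebra.
From mathcomp Require Import all_classical all_reals all_analysis.
From mathcomp Require Import zify ring lra.
Set Implicit Arguments. Unset Strict Implicit. Unset Printing Implicit Defensive.
Import Order.TTheory GRing.Theory Num.Theory.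
Local Open Scope classical_set_scope.
Local Open Scope ring_scope.

Section ExtendedSums.
Variable R : realType.
Local Open Scope ereal_scope.

Lemma esumZl (T : choiceType) (I : set T) (a : T -> \bar R) (r : R) :
  (0 <= r)%R -> (forall i, 0 <= a i) ->
  \esum_(i in I) (r%:E * a i) = r%:E * \esum_(i in I) a i.
Proof.
have le_esumZ (b : T -> \bar R) (u : R) : (0 <= u)%R -> (forall i, 0 <= b i) ->
    \esum_(i in I) (u%:E * b i) <= u%:E * \esum_(i in I) b i.
  move=> u0 b0; apply: ge_ereal_sup => _ [X [finX XI]] <-.
  rewrite -ge0_mule_fsumr//; apply: lee_wpmul2l; first by rewrite lee_fin.
  by apply: ereal_sup_ubound; exists X.
move=> r0 a0; have [->|r_neq0] := eqVneq r 0%R.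
  by rewrite mul0e esum1// => i _; rewrite mul0e.
have r_gt0 : (0 < r)%R by rewrite lt_def r_neq0.
apply/eqP; rewrite eq_le le_esumZ//= -lee_pdivlMl//.
rewrite [X in X <= _](_ : _ = \esum_(i in I) (r^-1%:E * (r%:E * a i))).
  by apply: le_esumZ; [rewrite invr_ge0 | move=> i; rewrite mule_ge0].
by apply: eq_esum => i _; rewrite muleA -EFinM mulVf// mul1e.
Qed.

Lemma esumZr (T : choiceType) (I : set T) (a : T -> \bar R) (r : R) :
  (0 <= r)%R -> (forall i, 0 <= a i) ->
  \esum_(i in I) (a i * r%:E) = (\esum_(i in I) a i) * r%:E.
Proof.
move=> r0 a0; rewrite [RHS]muleC -esumZl//.
by apply: eq_esum => i _; exact: muleC.
Qed.

Lemma esumM (T1 T2 : choiceType) (I : set T1) (J : set T2)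
    (f : T1 -> R) (g : T2 -> R) :
  (forall i, 0 <= f i)%R -> (forall j, 0 <= g j)%R ->
  \esum_(j in J) (g j)%:E \is a fin_num ->
  (\esum_(i in I) (f i)%:E) * (\esum_(j in J) (g j)%:E) =
  \esum_(k in I `*` J) (f k.1 * g k.2)%:E.
Proof.
move=> f0 g0 g_fin; rewrite -(fineK g_fin) -esumZr; first last.
- by move=> i; rewrite lee_fin.
- by apply/fine_ge0/esum_ge0 => j _; rewrite lee_fin.
rewrite -(@esum_esum _ _ _ I (fun=> J) (fun i j => (f i * g j)%:E)); last first.
  by move=> i j _ _; rewrite lee_fin mulr_ge0.
by apply: eq_esum => i _; rewrite fineK// -esumZl//; apply: eq_esum => j _; rewrite -EFinM.
Qed.

Lemma le_esum_subset (T : choiceType) (A B : set T) (a : T -> \bar R) :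
  A `<=` B -> (forall i, 0 <= a i) -> \esum_(i in A) a i <= \esum_(i in B) a i.
Proof.
move=> AB a0; rewrite esum_mkcond [leRHS]esum_mkcond.
apply: le_esum => i _; case: ifPn => [iA|_]; last by case: ifP.
by rewrite ifT// inE; apply: AB; rewrite -inE.
Qed.

Lemma lt_esum_at (T : choiceType) (S : set T) (a b : T -> \bar R) t :
  S t -> (forall i, 0 <= a i) -> (forall i, 0 <= b i) ->
  (forall i, S i -> a i <= b i) -> a t < b t ->
  \esum_(i in S) b i \is a fin_num ->
  \esum_(i in S) a i < \esum_(i in S) b i.
Proof.
move=> St a0 b0 ab ab_t b_fin.
have St1 : S `&` [set t] = [set t] by apply/setIidr => i ->.
rewrite (esumID [set t] S a)// (esumID [set t] S b)// St1 !esum_set1//.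
rewrite (esumID [set t] S b)// St1 esum_set1// fin_numD in b_fin.
have [_ rest_fin] := andP b_fin.
have rest_le : \esum_(i in S `&` ~` [set t]) a i <= \esum_(i in S `&` ~` [set t]) b i.
  by apply: le_esum => i [/ab].
apply: lte_leD => //; rewrite ge0_fin_numE; last exact: esum_ge0.
by apply: le_lt_trans rest_le _; rewrite -ge0_fin_numE//; exact: esum_ge0.
Qed.

Lemma nneseries_geometric (z : R) : (0 <= z < 1)%R ->
  \sum_(n <oo) (z ^+ n)%:E = ((1 - z)^-1)%:E.
Proof.
case/andP=> z0 z1; apply: cvg_lim => //.
apply: cvg_EFin; first by apply: nearW => n; rewrite /= sumEFin.
have -> : fine \o (fun n => \sum_(0 <= k < n) (z ^+ k)%:E) = series (geometric 1 z).
  apply/funext => n; rewrite /= sumEFin /= /series /=.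
  by apply: eq_bigr => k _; rewrite mul1r.
by rewrite -[X in _ --> X]mul1r; apply: cvg_geometric_series; rewrite ger0_norm.
Qed.

End ExtendedSums.

Section JacobiTheta.
Variable R : realType.
Implicit Types s c d m : R.

Definition etheta s c : \bar R :=
  \esum_(k in [set: int]) (expR (- s * (k%:~R + c) ^+ 2))%:E.

Lemma etheta_ge0 s c : (0 <= etheta s c)%E.
Proof. by apply: esum_ge0 => k _; rewrite lee_fin expR_ge0. Qed.

Lemma etheta_shift s c (m : int) : etheta s (c + m%:~R) = etheta s c.
Proof.
rewrite /etheta [RHS](reindex_esum [set: int] [set: int] (fun k => k + m)).
  by apply: eq_esum => k _; rewrite rmorphD /= addrAC addrA.
by rewrite setTT_bijective; exists (fun k => k - m) => k; rewrite ?addrK ?subrK.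
Qed.

Lemma etheta_floor s c : etheta s c = etheta s (c - (Num.floor c)%:~R).
Proof. by rewrite -(etheta_shift s (c - _) (Num.floor c)) subrK. Qed.

Definition zigzag (k : int) : nat :=
  match k with Posz n => n.*2 | Negz n => n.*2.+1 end.

Lemma zigzag_inj : injective zigzag.
Proof.
by move=> [n|n] [m|m] /=; rewrite -!muln2 => h; (try congr Posz); (try congr Negz); lia.
Qed.

Lemma zigzag_le (k : int) : (zigzag k)%:R <= 2 * (k%:~R : R) ^+ 2.
Proof.
rewrite -[2]/(2%:R); case: k => n /=.
  rewrite -natrX -natrM ler_nat -mul2n leq_mul2l /=.
  by case: n => // n; rewrite expnS leq_pmulr.
rewrite NegzE rmorphN /= sqrrN -natrX -natrM ler_nat -addn1 -mul2n.
apply: (@leq_trans (2 * n.+1)); first by rewrite mulnS addnC.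
by rewrite leq_mul2l /= expnS leq_pmulr.
Qed.

(* Compare with the geometric series of ratio exp(-s/2) along zigzag. *)
Lemma etheta0_fin s : 0 < s -> etheta s 0 \is a fin_num.
Proof.
move=> s_gt0; rewrite ge0_fin_numE ?etheta_ge0//.
set z := expR (- (s / 2)).
have z01 : 0 <= z < 1 by rewrite expR_ge0 expR_lt1 oppr_lt0 divr_gt0.
apply: (@le_lt_trans _ _ ((1 - z)^-1)%:E); last exact: ltry.
rewrite -nneseries_geometric// nneseries_esumT; last first.
  by move=> n; rewrite lee_fin exprn_ge0// expR_ge0.
apply: (@le_trans _ _ (\esum_(k in [set: int]) (z ^+ zigzag k)%:E)).
  apply: le_esum => k _; rewrite lee_fin addr0 /z -expRM_natr ler_expR.
  rewrite !mulNr lerN2; apply: le_trans (ler_wpM2l _ (zigzag_le k)) _.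
    by rewrite divr_ge0 // ltW.
  by rewrite mulrA -[s / 2 * 2]mulrA mulVf // mulr1.
rewrite -(esum_image [set: int] zigzag (fun n => (z ^+ n)%:E)); last first.
  by move=> ? ? _ _; exact: zigzag_inj.
by apply: le_esum_subset => // n; rewrite lee_fin exprn_ge0//; case/andP: z01.
Qed.

Lemma expR_sqr_le_neighbours s c m (k : int) :
  0 < s -> 0 <= m -> m <= c -> m <= 1 - c ->
  expR (- s * (k%:~R + c) ^+ 2) <=
  expR (- s * m ^+ 2) * (expR (- s * (k%:~R + 0) ^+ 2) + expR (- s * (k%:~R + 1) ^+ 2)).
Proof.
move=> s_gt0 m_ge0 mc mc1; rewrite addr0 mulrDr -!expRD.
have [k_ge0|k_lt0] := lerP 0 k.
- have kR : 0 <= (k%:~R : R) by rewrite ler0z.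
  rewrite -[leLHS]addr0; apply: lerD; last exact: expR_ge0.
  rewrite ler_expR.
  have : k%:~R ^+ 2 + m ^+ 2 <= (k%:~R + c) ^+ 2 :> R by nra.
  by nra.
- have kR : (k%:~R : R) <= -1.
    have : k <= -1 by lia.
    by rewrite -(ler_int R) => /le_trans; apply; rewrite rmorphN rmorph1.
  rewrite -[leLHS]add0r; apply: lerD; first exact: expR_ge0.
  rewrite ler_expR.
  have : (k%:~R + 1) ^+ 2 + m ^+ 2 <= (k%:~R + c) ^+ 2 :> R by nra.
  by nra.
Qed.

Lemma etheta_le_gap s c m : 0 < s -> 0 <= m -> m <= c -> m <= 1 - c ->
  (etheta s c <= (2 * expR (- s * m ^+ 2))%:E * etheta s 0)%E.
Proof.
move=> s_gt0 m_ge0 mc mc1.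
apply: (@le_trans _ _ (\esum_(k in [set: int]) ((expR (- s * m ^+ 2))%:E *
   ((expR (- s * (k%:~R + 0) ^+ 2))%:E + (expR (- s * (k%:~R + 1) ^+ 2))%:E)))%E).
  by apply: le_esum => k _; rewrite -EFinD -EFinM lee_fin expR_sqr_le_neighbours.
rewrite esumZl ?expR_ge0//; last by move=> k; rewrite adde_ge0 // lee_fin expR_ge0.
rewrite esumD; try by move=> k _; rewrite lee_fin expR_ge0.
have -> : \esum_(k in [set: int]) (expR (- s * (k%:~R + 1) ^+ 2))%:E = etheta s 0.
  by rewrite -(etheta_shift s 0 1) /etheta; apply: eq_esum => k _; rewrite add0r.
rewrite -/(etheta s 0) -(fineK (etheta0_fin s_gt0)) -EFinD -!EFinM lee_fin.
by rewrite le_eqVlt; apply/orP; left; apply/eqP; ring.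
Qed.

Lemma etheta_fin s c : 0 < s -> etheta s c \is a fin_num.
Proof.
move=> s_gt0; rewrite ge0_fin_numE ?etheta_ge0// etheta_floor.
apply: (le_lt_trans (etheta_le_gap s_gt0 (lexx 0) _ _)).
- by rewrite subr_ge0 floor_le.
- by have := floorD1_gt c; rewrite rmorphD /=; lra.
- rewrite -ge0_fin_numE; last by rewrite mule_ge0 ?etheta_ge0// lee_fin mulr_ge0// expR_ge0.
  by rewrite fin_numM // etheta0_fin.
Qed.

Definition sumdiff (e : int) (p : int * int) : int * int := (p.1 + p.2 + e, p.1 - p.2).

Definition even_sum : set (int * int) := [set p | ((p.1 + p.2) %% 2)%Z = 0].

Lemma sumdiff_inj e : injective (sumdiff e).
Proof. by move=> [k l] [k' l'] [] /= h1 h2; congr pair; lia. Qed.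

Lemma image_sumdiff0 : sumdiff 0 @` setT = even_sum.
Proof.
apply/seteqP; split => [_ [[k l] _ <-]|[j k]]; rewrite /even_sum /sumdiff /=.
  by rewrite addr0 (_ : k + l + (k - l) = 2 * k) ?modzMr//; ring.
move=> h; exists (((j + k) %/ 2)%Z, j - ((j + k) %/ 2)%Z) => //=.
by congr pair; lia.
Qed.

Lemma image_sumdiff1 : sumdiff 1 @` setT = ~` even_sum.
Proof.
apply/seteqP; split => [_ [[k l] _ <-]|[j k]]; rewrite /even_sum /sumdiff /=.
  by lia.
move=> h; exists (((j + k) %/ 2)%Z, j - ((j + k) %/ 2)%Z - 1) => //=.
by congr pair; lia.
Qed.

(* Reindex Z^2 by (k, l) |-> (k + l + e, k - l) for e = 0, 1: the two images
   split Z^2 by the parity of the coordinate sum. *)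
Lemma etheta_mul s c d : 0 < s ->
  (etheta s c * etheta s d =
    etheta (2 * s) ((c + d) / 2) * etheta (2 * s) ((c - d) / 2) +
    etheta (2 * s) ((c + d + 1) / 2) * etheta (2 * s) ((c - d + 1) / 2))%E.
Proof.
move=> s_gt0; have s2_gt0 : 0 < 2 * s by rewrite mulr_gt0.
rewrite /etheta !esumM; try by move=> *; exact: expR_ge0.
all: try exact: etheta_fin.
rewrite !setXTT (esumID even_sum); last by move=> p _; rewrite lee_fin mulr_ge0 // expR_ge0.
rewrite !setTI -image_sumdiff1 -image_sumdiff0.
rewrite !esum_image; try by move=> ? ? _ _; exact: sumdiff_inj.
congr (_ + _)%E; apply: eq_esum => -[k l] _; rewrite /sumdiff /= -!expRD;
  congr (expR _)%:E; rewrite !(intrD, intrN) ?rmorph0 ?rmorph1; by field.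
Qed.

End JacobiTheta.

Section RealTheta.
Variable R : realType.
Implicit Types s c d m : R.

Definition theta s c : R := fine (etheta s c).

Lemma thetaE s c : 0 < s -> etheta s c = (theta s c)%:E.
Proof. by move=> s_gt0; rewrite /theta fineK // etheta_fin. Qed.

Lemma theta_ge0 s c : 0 <= theta s c.
Proof. exact/fine_ge0/etheta_ge0. Qed.

Lemma theta0_ge1 s : 0 < s -> 1 <= theta s 0.
Proof.
move=> s_gt0; rewrite -lee_fin -thetaE //.
apply: (@le_trans _ _ (\esum_(k in [set 0%R]) (expR (- s * (k%:~R + 0) ^+ 2))%:E)%E).
  by rewrite esum_set1 ?lee_fin ?expR_ge0 // addr0 expr0n /= mulr0 expR0.
by apply: le_esum_subset => // k; rewrite lee_fin expR_ge0.
Qed.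

Lemma theta_floor s c : theta s c = theta s (c - (Num.floor c)%:~R).
Proof. by rewrite /theta -etheta_floor. Qed.

Lemma theta_mul s c d : 0 < s ->
  theta s c * theta s d =
    theta (2 * s) ((c + d) / 2) * theta (2 * s) ((c - d) / 2) +
    theta (2 * s) ((c + d + 1) / 2) * theta (2 * s) ((c - d + 1) / 2).
Proof.
move=> s_gt0; have s2_gt0 : 0 < 2 * s by rewrite mulr_gt0.
by have := etheta_mul c d s_gt0; rewrite !thetaE // -!EFinM -EFinD => -[].
Qed.

Lemma theta_le_gap s c m : 0 < s -> 0 <= m -> m <= c -> m <= 1 - c ->
  theta s c <= 2 * expR (- s * m ^+ 2) * theta s 0.
Proof. by move=> *; rewrite -lee_fin EFinM -!thetaE //; exact: etheta_le_gap. Qed.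

Lemma theta_le2 s c : 0 < s -> theta s c <= 2 * theta s 0.
Proof.
move=> s_gt0; rewrite theta_floor.
have := @theta_le_gap s (c - (Num.floor c)%:~R) 0 s_gt0 (lexx 0).
rewrite expr0n /= mulr0 expR0 mulr1; apply.
- by rewrite subr_ge0 floor_le.
- by have := floorD1_gt c; rewrite rmorphD /=; lra.
Qed.

Lemma theta_duplication s c : 0 < s ->
  let G := theta (2 * s) in
  [/\ theta s c ^+ 2 = G c * G 0 + G (c + 1/2) * G (1/2),
      theta s (2 * c) * theta s 0 = G c ^+ 2 + G (c + 1/2) ^+ 2 &
      theta s 0 ^+ 2 = G 0 ^+ 2 + G (1/2) ^+ 2].
Proof.
move=> s_gt0 G; split; rewrite ?expr2 theta_mul //;
  by congr (G _ * G _ + G _ * G _); field.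
Qed.

Lemma theta_sqr_le s c : 0 < s ->
  2 * theta s c ^+ 2 <= theta s (2 * c) * theta s 0 + theta s 0 ^+ 2.
Proof.
move=> s_gt0; have [-> -> ->] := theta_duplication c s_gt0.
set u := theta _ c; set v := theta _ (c + _); set A := theta _ 0; set B := theta _ (1/2).
rewrite -subr_ge0 (_ : _ - _ = (u - A) ^+ 2 + (v - B) ^+ 2); last by ring.
by rewrite addr_ge0 // sqr_ge0.
Qed.

Lemma exists_expr2_gt (y : R) : exists k : nat, y < 2 ^+ k.
Proof.
exists (Num.truncn `|y|).+1.
have y_lt : `|y| < ((Num.truncn `|y|).+1)%:R by rewrite -truncn_lt_nat ?normr_ge0.
apply: le_lt_trans (ler_norm y) (lt_le_trans y_lt _).
by rewrite -[2]/(2%:R) -natrX ler_nat ltnW // ltn_expl.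
Qed.

(* By theta_sqr_le, doubling c at least doubles a positive excess
   theta s c - theta s 0, which contradicts theta_le2. *)
Lemma theta_le s c : 0 < s -> theta s c <= theta s 0.
Proof.
move=> s_gt0; rewrite leNgt; apply/negP => hlt.
set F0 := theta s 0; set d0 := theta s c - F0.
have F0_ge1 : 1 <= F0 by exact: theta0_ge1.
have d0_gt0 : 0 < d0 by rewrite subr_gt0.
have excess k : 2 ^+ k * d0 <= theta s (2 ^+ k * c) - F0.
  elim: k => [|k IH]; first by rewrite !expr0 !mul1r.
  have := theta_sqr_le (2 ^+ k * c) s_gt0; rewrite !exprS -!mulrA -/F0.
  have pow_gt0 : 0 < 2 ^+ k :> R by rewrite exprn_gt0.
  move: IH; set y := theta s _; set z := theta s _ => IH h.
  have y_gt : 0 < y - F0 by apply: lt_le_trans IH; rewrite mulr_gt0.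
  clearbody F0 d0 y z.
  have : 0 <= F0 * (z - F0 - 4 * (y - F0)) by nra.
  rewrite pmulr_rge0; last exact: lt_le_trans F0_ge1.
  lra.
have [k hk] := exists_expr2_gt (F0 / d0).
have := excess k; have := theta_le2 (2 ^+ k * c) s_gt0; rewrite -/F0.
have : F0 < 2 ^+ k * d0 by rewrite -ltr_pdivrMr.
lra.
Qed.

(* Equality in theta_le forces equality in the sum of squares of theta_sqr_le. *)
Lemma theta_eq_double s c : 0 < s -> theta s c = theta s 0 ->
  theta (2 * s) c = theta (2 * s) 0.
Proof.
move=> s_gt0 eq_c; have [h1 h2 h3] := theta_duplication c s_gt0.
have le2c := theta_le (2 * c) s_gt0; have F0_ge1 := theta0_ge1 s_gt0.
move: h1 h2 h3 le2c F0_ge1; rewrite eq_c.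
move: (theta s (2 * c)) (theta s 0) (theta (2 * s) c) (theta (2 * s) (c + 1/2)).
move: (theta (2 * s) 0) (theta (2 * s) (1/2)) => A B W F0 u v h1 h2 h3 le2c F0_ge1.
have : (u - A) ^+ 2 + (v - B) ^+ 2 <= 0 by nra.
have := sqr_ge0 (u - A); have := sqr_ge0 (v - B) => ? ? ?.
have /eqP : (u - A) ^+ 2 = 0 by lra.
by rewrite sqrf_eq0 subr_eq0 => /eqP.
Qed.

Lemma theta_eq_expr2 s c k : 0 < s -> theta s c = theta s 0 ->
  theta (2 ^+ k * s) c = theta (2 ^+ k * s) 0.
Proof.
move=> s_gt0 eq_c; elim: k => [|k IH]; first by rewrite expr0 mul1r.
by rewrite exprS -mulrA; apply: theta_eq_double; rewrite // mulr_gt0 ?exprn_gt0.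
Qed.

(* For large s the gap bound theta_le_gap makes theta s c < theta s 0, so by
   theta_eq_expr2 equality cannot hold for the original s either. *)
Lemma theta_lt s c : 0 < s -> (forall m : int, c <> m%:~R) -> theta s c < theta s 0.
Proof.
move=> s_gt0 c_nint; rewrite lt_neqAle theta_le // andbT; apply/eqP => eq_c.
set d := c - (Num.floor c)%:~R.
have d_ge0 : 0 <= d by rewrite subr_ge0 floor_le.
have d_lt1 : d < 1 by have := floorD1_gt c; rewrite rmorphD /= /d; lra.
have d_neq0 : d != 0 by apply/eqP => /eqP; rewrite subr_eq0 => /eqP /c_nint.
set m := Num.min d (1 - d).
have m_gt0 : 0 < m by rewrite lt_min lt_def d_neq0 d_ge0 subr_gt0 d_lt1.
have m_le_d : m <= d by rewrite ge_min lexx.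
have m_le_1d : m <= 1 - d by rewrite ge_min lexx orbT.
have [k hk] := exists_expr2_gt (s * m ^+ 2)^-1.
set t := 2 ^+ k * s.
have t_gt0 : 0 < t by rewrite mulr_gt0 // exprn_gt0.
have tm_gt1 : 1 < t * m ^+ 2.
  by rewrite /t -mulrA -ltr_pdivrMr ?mulr_gt0 ?exprn_gt0 // div1r.
have gap := theta_le_gap t_gt0 (ltW m_gt0) m_le_d m_le_1d.
have := theta_eq_expr2 k s_gt0 eq_c; rewrite -/t theta_floor -/d => eq_d.
have F0_ge1 := theta0_ge1 t_gt0.
have : 2 * expR (- t * m ^+ 2) < 1.
  rewrite mulNr expRN ltr_pdivrMr ?expR_gt0 // mul1r.
  by have := expR_ge1Dx (t * m ^+ 2); lra.
move: gap; rewrite eq_d; set X := expR _ => gap X_lt.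
have : theta t 0 * (1 - 2 * X) <= 0 by lra.
by rewrite pmulr_rle0 ?subr_le0 ?(lt_le_trans _ F0_ge1) // leNgt X_lt.
Qed.

End RealTheta.

Section GaussianSums.
Variables (R : realType) (n : nat).
Implicit Types (x a : R) (N : 'M[R]_n) (v w : 'cV[int]_n).

Definition intcv w : 'cV[R]_n := map_mx (fun z : int => z%:~R) w.

Definition gauss_sum x N : \bar R :=
  \esum_(w in [set: 'cV[int]_n]) (expR (- x * sqnorm (N *m intcv w)))%:E.

Lemma theta_sum_lattice x N :
  N \in unitmx -> theta_sum (lattice N) x = gauss_sum x N.
Proof.
move=> N_unit; rewrite /theta_sum /lattice /gauss_sum esum_image // => w1 w2 _ _ eq12.
have /matrixP eqR : intcv w1 = intcv w2.
  by rewrite -(mulKmx N_unit (intcv w1)) eq12 mulKmx.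
by apply/matrixP => p q; have := eqR p q; rewrite !mxE => /eqP; rewrite eqr_int => /eqP.
Qed.

Definition zero_at (i : 'I_n) : set 'cV[int]_n := [set v | v i 0 = 0].

Definition addcoord (i : 'I_n) (vk : 'cV[int]_n * int) : 'cV[int]_n :=
  vk.1 + vk.2 *: delta_mx i 0.

Lemma mulmx_addcoord N (i p : 'I_n) vk :
  (N *m intcv (addcoord i vk)) p 0 = (N *m intcv vk.1) p 0 + N p i * vk.2%:~R.
Proof.
case: vk => v k; rewrite !mxE (bigD1 i) //= [in RHS](bigD1 i) //= !mxE eqxx /= mulr1.
rewrite rmorphD /= mulrDr -!addrA; congr (_ + _); rewrite addrC; congr (_ + _).
by apply: eq_bigr => q qi; rewrite !mxE (negbTE qi) /= mulr0 addr0.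
Qed.

Lemma addcoord_inj (i : 'I_n) (W : set 'cV[int]_n) :
  W `<=` zero_at i -> set_inj (W `*` setT) (addcoord i).
Proof.
move=> W_i [v k] [u l] /set_mem [/W_i /= vi _] /set_mem [/W_i /= ui _] /= e.
have ekl : k = l.
  have := congr1 (fun w : 'cV[int]_n => w i 0) e; rewrite /addcoord /= !mxE /= vi ui.
  by rewrite !eqxx /= !add0r !mulr1.
by subst l; congr pair; move: e => /addIr.
Qed.

Lemma esum_lines x a N (i : 'I_n) (W : set 'cV[int]_n) :
  0 < a -> N i i = a -> (forall p, p != i -> N p i = 0) ->
  W `<=` zero_at i ->
  \esum_(w in addcoord i @` (W `*` setT)) (expR (- x * sqnorm (N *m intcv w)))%:E =
  (\esum_(v in W)
     ((expR (- x * \sum_(p < n | p != i) (N *m intcv v) p 0 ^+ 2)%R)%:E *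
      etheta (x * a ^+ 2)%R ((N *m intcv v) i 0 / a)%R))%E.
Proof.
move=> a_gt0 Nii Ni W_i; rewrite esum_image; last exact: addcoord_inj.
rewrite -(@esum_esum _ _ _ W (fun=> setT)
   (fun v k => (expR (- x * sqnorm (N *m intcv (addcoord i (v, k)))))%:E)); last first.
  by move=> *; rewrite lee_fin expR_ge0.
apply: eq_esum => v _; rewrite /etheta -esumZl;
  [|exact: expR_ge0|by move=> k; rewrite lee_fin expR_ge0].
apply: eq_esum => k _; rewrite -EFinM -expRD; congr (expR _)%:E.
rewrite /sqnorm (bigD1 i) //= mulmx_addcoord Nii.
rewrite (eq_bigr (fun p => (N *m intcv v) p 0 ^+ 2)); last first.
  by move=> p pi; rewrite mulmx_addcoord Ni // mul0r addr0.
by field; rewrite lt0r_neq0.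
Qed.

End GaussianSums.

Section ClearRow.
Variables (R : realType) (n : nat).
Implicit Types (x a : R) (N : 'M[R]_n) (v w : 'cV[int]_n).

Lemma image_addcoord (i : 'I_n) :
  addcoord i @` (zero_at i `*` setT) = [set: 'cV[int]_n].
Proof.
apply/seteqP; split => // w _; exists (w - w i 0 *: delta_mx i 0, w i 0).
  by split => //; rewrite /zero_at /= !mxE !eqxx mulr1 subrr.
by rewrite /addcoord /= subrK.
Qed.

Lemma gauss_sum_lines x a N (i : 'I_n) :
  0 < a -> N i i = a -> (forall p, p != i -> N p i = 0) ->
  gauss_sum x N =
  (\esum_(v in zero_at i)
     ((expR (- x * \sum_(p < n | p != i) (N *m intcv R v) p 0 ^+ 2)%R)%:E *
      etheta (x * a ^+ 2)%R ((N *m intcv R v) i 0 / a)%R))%E.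
Proof.
by move=> a_gt0 Nii Ni; rewrite /gauss_sum -(image_addcoord i) (esum_lines _ a_gt0).
Qed.

Definition clear_row N (i : 'I_n) a : 'M[R]_n :=
  \matrix_(p, q) if p == i then (if q == i then a else 0) else N p q.

Lemma gauss_sum_clear_row x a N (i : 'I_n) :
  0 < a -> N i i = a -> (forall p, p != i -> N p i = 0) ->
  gauss_sum x (clear_row N i a) =
  (\esum_(v in zero_at i)
     ((expR (- x * \sum_(p < n | p != i) (N *m intcv R v) p 0 ^+ 2)%R)%:E *
      etheta (x * a ^+ 2)%R 0))%E.
Proof.
move=> a_gt0 Nii Ni; rewrite (gauss_sum_lines (i := i) _ a_gt0); first last.
- by move=> p pi; rewrite mxE (negbTE pi) Ni.
- by rewrite mxE !eqxx.
apply: eq_esum => v vi; congr (_ * etheta _ _)%E.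
  congr (expR (_ * _))%:E; apply: eq_bigr => p pi; congr (_ ^+ 2).
  by rewrite !mxE; apply: eq_bigr => q _; rewrite !mxE (negbTE pi).
rewrite !mxE (bigD1 i) //= big1 ?mxE ?eqxx ?vi ?mulr0 ?add0r ?mul0r //.
by move=> q qi; rewrite !mxE eqxx (negbTE qi) mul0r.
Qed.

Lemma gauss_sum_le_clear_row x a N (i : 'I_n) :
  0 < x -> 0 < a -> N i i = a -> (forall p, p != i -> N p i = 0) ->
  (gauss_sum x N <= gauss_sum x (clear_row N i a))%E.
Proof.
move=> x_gt0 a_gt0 Nii Ni.
rewrite gauss_sum_clear_row // (gauss_sum_lines (i := i) _ a_gt0) //.
have xa_gt0 : 0 < x * a ^+ 2 by rewrite mulr_gt0 // exprn_gt0.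
apply: le_esum => v _; apply: lee_wpmul2l; first by rewrite lee_fin expR_ge0.
by rewrite !thetaE // lee_fin theta_le.
Qed.

Lemma gauss_sum_lt_clear_row x a N (i j : 'I_n) :
  0 < x -> 0 < a -> N i i = a -> (forall p, p != i -> N p i = 0) ->
  (forall m : int, N i j / a <> m%:~R) ->
  gauss_sum x (clear_row N i a) \is a fin_num ->
  (gauss_sum x N < gauss_sum x (clear_row N i a))%E.
Proof.
move=> x_gt0 a_gt0 Nii Ni Nij_nint.
have ji : j != i.
  by apply/eqP => eji; apply: (Nij_nint 1); rewrite eji Nii divff ?lt0r_neq0.
have xa_gt0 : 0 < x * a ^+ 2 by rewrite mulr_gt0 // exprn_gt0.
rewrite gauss_sum_clear_row // (gauss_sum_lines (i := i) _ a_gt0) // => fin.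
apply: (lt_esum_at (t := delta_mx j 0)) => //.
- by rewrite /zero_at /= mxE eq_sym (negbTE ji).
- by move=> v; rewrite mule_ge0 // ?etheta_ge0 // lee_fin expR_ge0.
- by move=> v; rewrite mule_ge0 // ?etheta_ge0 // lee_fin expR_ge0.
- move=> v _; apply: lee_wpmul2l; first by rewrite lee_fin expR_ge0.
  by rewrite !thetaE // lee_fin theta_le.
rewrite lte_pmul2l ?lte_fin ?expR_gt0 // !thetaE // lte_fin.
rewrite (_ : (N *m intcv R (delta_mx j 0)) i 0 = N i j) ?theta_lt //.
rewrite !mxE (bigD1 j) //= big1 ?addr0 ?mxE ?eqxx ?mulr1 //.
by move=> q qj; rewrite !mxE (negbTE qj) /= mulr0.
Qed.

End ClearRow.

Section DiagonalSum.
Variables (R : realType) (n : nat).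

Definition supported_below (k : nat) : set 'cV[int]_n :=
  [set w | forall p : 'I_n, (k <= p)%N -> w p 0 = 0].

Lemma image_addcoord_supported k (i : 'I_n) : val i = k ->
  addcoord i @` (supported_below k `*` setT) = supported_below k.+1.
Proof.
move=> ik; apply/seteqP; split.
- move=> _ [[v l] [/= v_supp _] <-] p kp; rewrite !mxE v_supp ?(ltnW kp) //.
  have /negbTE -> : p != i by apply/eqP => epi; move: kp; rewrite epi ik ltnn.
  by rewrite mulr0 addr0.
- move=> w w_supp; exists (w - w i 0 *: delta_mx i 0, w i 0); last first.
    by rewrite /addcoord /= subrK.
  split => //= p kp; rewrite !mxE.
  have [->|pi] := eqVneq p i; first by rewrite mulr1 subrr.
  rewrite mulr0 subr0; apply: w_supp.
  by rewrite ltn_neqAle kp andbT -ik; apply: contra pi => /eqP/val_inj ->.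
Qed.

Lemma gauss_sum_diag_fin x (a : 'I_n -> R) : 0 < x -> (forall i, 0 < a i) ->
  gauss_sum x (diag_mx (\row_i a i)) \is a fin_num.
Proof.
move=> x_gt0 a_gt0; set D := diag_mx _.
have D_entry w p : (D *m intcv R w) p 0 = a p * (w p 0)%:~R.
  rewrite !mxE (bigD1 p) //= big1 ?addr0 ?mxE ?eqxx ?mulr1n // => q qp.
  by rewrite !mxE eq_sym (negbTE qp) mulr0n mul0r.
pose g w := (expR (- x * sqnorm (D *m intcv R w)))%:E.
suff fin_k k : (k <= n)%N -> \esum_(w in supported_below k) g w \is a fin_num.
  rewrite /gauss_sum (_ : setT = supported_below n) ?fin_k //.
  by apply/seteqP; split => // w _ p; rewrite leqNgt ltn_ord.
elim: k => [_|k IH kn].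
  rewrite (_ : supported_below 0 = [set 0]).
    by rewrite esum_set1 // lee_fin expR_ge0.
  apply/seteqP; split => [w w_supp|w ->]; last by move=> p _; rewrite mxE.
  by apply/matrixP => p q; rewrite !mxE ord1 w_supp.
set i : 'I_n := Ordinal kn.
have D_col p : p != i -> D p i = 0 by move=> pi; rewrite !mxE (negbTE pi) mulr0n.
have supp_i : supported_below k `<=` zero_at i by move=> v; apply.
rewrite -(image_addcoord_supported (i := i)) // (esum_lines _ (a_gt0 i)) //; last first.
  by rewrite !mxE eqxx mulr1n.
have xa_gt0 : 0 < x * a i ^+ 2 by rewrite mulr_gt0 // exprn_gt0.
rewrite (eq_esum (b := fun v => g v * (theta (x * a i ^+ 2) 0)%:E)%E).
  rewrite esumZr ?fin_numM ?IH ?(ltnW kn) //; first exact: theta_ge0.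
  by move=> v; rewrite lee_fin expR_ge0.
move=> v /supp_i vi; rewrite D_entry vi mulr0 mul0r -thetaE //.
congr (_ * _)%E; congr (expR (_ * _))%:E.
by rewrite /sqnorm [in RHS](bigD1 i) //= D_entry vi mulr0 expr2 mulr0 add0r.
Qed.

End DiagonalSum.

Lemma unitmx_upper (R : comUnitRingType) n (N : 'M[R]_n) :
  (forall i j : 'I_n, (j < i)%N -> N i j = 0) -> (forall i, N i i \is a GRing.unit) ->
  N \in unitmx.
Proof.
move=> N_upper N_diag; rewrite unitmxE -det_tr det_trig; last first.
  by apply/is_trig_mxP => i j ij; rewrite mxE N_upper.
by apply: unitr_prod => i _; rewrite mxE.
Qed.

(* If every M i j / a i (i < j) is an integer, M = diag(a) U for a unipotent
   integer matrix U, so M and diag(a) generate the same lattice. *)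
Lemma lattice_eq_diag (R : realType) n (a : 'I_n -> R) (M : 'M[R]_n) :
  (forall i, 0 < a i) ->
  (forall i j : 'I_n, (j < i)%N -> M i j = 0) -> (forall i, M i i = a i) ->
  (forall i j : 'I_n, (i < j)%N -> exists m : int, M i j / a i = m%:~R) ->
  lattice M = lattice (diag_mx (\row_i a i)).
Proof.
move=> a_gt0 M_upper M_diag M_int.
pose U : 'M[int]_n := \matrix_(i, j)
  if i == j then 1 else if (i < j)%N then Num.floor (M i j / a i) else 0.
have M_eq : M = diag_mx (\row_i a i) *m map_mx intr U.
  apply/matrixP => i j; rewrite mul_diag_mx !mxE.
  have [->|ij] := eqVneq i j; first by rewrite M_diag mulr1.
  case: ltngtP => [i_lt_j|j_lt_i|/val_inj eij]; last by rewrite eij eqxx in ij.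
  - have [m Mm] := M_int i j i_lt_j.
    by rewrite Mm intrKfloor -Mm mulrC divfK // lt0r_neq0.
  - by rewrite mulr0 M_upper.
have U_unit : U \in unitmx.
  apply: unitmx_upper => [i j ji|i]; last by rewrite !mxE eqxx unitr1.
  rewrite !mxE ltnNge (ltnW ji) /=.
  by case: eqP => // eij; move: ji; rewrite eij ltnn.
apply/seteqP; split => _ [w _ <-].
- by exists (U *m w) => //; rewrite M_eq -mulmxA map_mxM.
- exists (invmx U *m w) => //; rewrite M_eq -mulmxA -map_mxM.
  by rewrite mulmxA mulmxV // mul1mx.
Qed.

Section PartialDiagonalization.
Variables (R : realType) (n : nat) (a : 'I_n -> R) (M : 'M[R]_n).
Hypothesis a_gt0 : forall i, 0 < a i.
Hypothesis M_upper : forall i j : 'I_n, (j < i)%N -> M i j = 0.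
Hypothesis M_diag : forall i, M i i = a i.

Definition diag_rows (k : nat) : 'M[R]_n :=
  \matrix_(p, q) if (p < k)%N then (if p == q then a p else 0) else M p q.

Lemma diag_rows0 : diag_rows 0 = M.
Proof. by apply/matrixP => p q; rewrite mxE ltn0. Qed.

Lemma diag_rowsn : diag_rows n = diag_mx (\row_i a i).
Proof. by apply/matrixP => p q; rewrite !mxE ltn_ord; case: eqP. Qed.

Lemma diag_rows_diag k i : diag_rows k i i = a i.
Proof. by rewrite mxE eqxx M_diag if_same. Qed.

Lemma diag_rows_unit k : diag_rows k \in unitmx.
Proof.
apply: unitmx_upper => [i j ji|i]; last by rewrite diag_rows_diag unitfE lt0r_neq0.
rewrite mxE; case: ifP => _; last exact: M_upper.
by case: eqP => // eij; move: ji; rewrite eij ltnn.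
Qed.

Lemma diag_rows_col k (i : 'I_n) :
  val i = k -> forall p, p != i -> diag_rows k p i = 0.
Proof.
move=> ik p pi; rewrite mxE (negbTE pi); case: ifP => // /negbT.
rewrite -leqNgt -ik => ip; apply: M_upper.
by rewrite ltn_neqAle ip andbT; apply: contra pi => /eqP/val_inj ->.
Qed.

Lemma diag_rowsS k (i : 'I_n) :
  val i = k -> diag_rows k.+1 = clear_row (diag_rows k) i (a i).
Proof.
move=> ik; apply/matrixP => p q; rewrite !mxE.
have [->|pi] := eqVneq p i; first by rewrite ik ltnSn eq_sym.
by rewrite ltnS leq_eqVlt -ik (inj_eq val_inj) (negbTE pi).
Qed.

Variable x : R.
Hypothesis x_gt0 : 0 < x.

Lemma gauss_sum_diag_rows_le k1 k2 : (k1 <= k2 <= n)%N ->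
  (gauss_sum x (diag_rows k1) <= gauss_sum x (diag_rows k2))%E.
Proof.
elim: k2 => [|k IH]; first by rewrite leqn0 => /andP[/eqP ->].
rewrite leq_eqVlt ltnS => /andP[/orP[/eqP ->//|k1k] kn].
apply: le_trans (IH _) _; first by rewrite k1k ltnW.
rewrite (diag_rowsS (i := Ordinal kn)) //.
apply: gauss_sum_le_clear_row => //; first exact: diag_rows_diag.
exact: diag_rows_col.
Qed.

Lemma gauss_sum_diag_rows_fin k :
  (k <= n)%N -> gauss_sum x (diag_rows k) \is a fin_num.
Proof.
move=> kn; rewrite ge0_fin_numE; last by apply: esum_ge0 => w _; rewrite lee_fin expR_ge0.
apply: le_lt_trans (gauss_sum_diag_rows_le (k2 := n) _) _; first by rewrite kn leqnn.
by rewrite -ge0_fin_numE ?diag_rowsn ?gauss_sum_diag_fin // esum_ge0 // => w _;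
  rewrite lee_fin expR_ge0.
Qed.

End PartialDiagonalization.

Theorem theorem2 (R : realType) (n : nat) (hn : (0 < n)%N)
  (a : 'I_n -> R) (ha : forall i, 0 < a i)
  (M : 'M[R]_n)
  (hupper : forall i j : 'I_n, (j < i)%N -> M i j = 0)
  (hdiag : forall i : 'I_n, M i i = a i)
  (hneq : lattice M <> lattice (diag_mx (\row_i a i)))
  (x : R) (hx : 0 < x) :
  (theta_sum (lattice M) x < theta_sum (lattice (diag_mx (\row_i a i))) x)%E.
Proof.
have [[i [j [ij M_nint]]]|M_int] := pselect
  (exists i j : 'I_n, (i < j)%N /\ forall m : int, M i j / a i <> m%:~R); last first.
  exfalso; apply/hneq/lattice_eq_diag => // i j ij.
  apply: contrapT => no_m; apply: M_int; exists i, j; split => // m Mm.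
  by apply: no_m; exists m.
rewrite -(diag_rows0 a M) -(diag_rowsn a M) !theta_sum_lattice ?diag_rows_unit //.
have mono := gauss_sum_diag_rows_le ha hupper hdiag hx.
apply: le_lt_trans (mono 0 i _) _; first by rewrite leq0n (ltnW (ltn_ord i)).
apply: lt_le_trans (mono i.+1 n _); last by rewrite ltn_ord leqnn.
rewrite (diag_rowsS a M (i := i)) //.
apply: (gauss_sum_lt_clear_row (j := j)) => //.
- exact: diag_rows_diag.
- exact: diag_rows_col.
- by rewrite mxE ltnn.
- by rewrite -diag_rowsS // gauss_sum_diag_rows_fin.
Qed.
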